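(* In an automorphic loop $Q$ the following identities hold for all $x,y,z\in Q$, where $t:=(xy)/x$: (1) $\big(x/((x/y)^{-1})\big)^{-1}\,(x/y)=(x/y)^{-1}\,y^{-1}$; (2) $\Big(\big((x/(xy))^{-1}\big)/x^{-1}\Big)^{-1}\,x=x/(yx)$; (3) $\big((x\,(y/z))\,z\big)/y=\big((xz)/y\big)\,\big((z/y)^{-1}\big)$; (4) $\big((xy)/z\big)\,\big((y/z)^{-1}\big)=\Big((x/z)\,\big((y/z)^{-1}\big)\Big)\,y$; (5) $x^{-1}\Big((x/t)\,\big(((y/x)/t)^{-1}\big)\Big)=(x/t)\,\big((y/t)^{-1}\big)$; (6) $\big((x/(xy))^{-1}\big)\big/\Big((y/(xy))\,\big((x/(xy))^{-1}\big)\Big)=x$.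
   Context: A loop is a set with a binary operation in which all equations $ax=b$, $ya=b$ are uniquely solvable and which has a two-sided identity $1$. For $a\in L$, $R_a:x\mapsto xa$, $L_a:x\mapsto ax$; the inner mapping group is the stabilizer of $1$ in the group generated by all $R_a,L_a$. A loop is automorphic if every inner mapping is an automorphism. Automorphic loops are power associative, so inverses $x^{-1}$ are well defined. Notation: $u/v$ denotes the unique $z$ with $zv=u$. *)

(** Unique solvability is
    encoded by the left/right division operations:
      ldiv a b  (= a\b) is the unique y with a*y = b,
      rdiv b a  (= b/a) is the unique z with z*a = b. *)
Record loop := Loop {
  carrier :> Type;
  mul : carrier -> carrier -> carrier;
  ldiv : carrier -> carrier -> carrier;
  rdiv : carrier -> carrier -> carrier;
  one : carrier;
  mul_ldiv : forall a b, mul a (ldiv a b) = b;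
  ldiv_mul : forall a y, ldiv a (mul a y) = y;
  rdiv_mul_ : forall b a, mul (rdiv b a) a = b;
  mul_rdiv : forall z a, rdiv (mul z a) a = z;
  mul1l : forall x, mul one x = x;
  mul1r : forall x, mul x one = x
}.

Arguments mul {Q} : rename.
Arguments ldiv {Q} : rename.
Arguments rdiv {Q} : rename.
Arguments one {Q} : rename.

Definition Rt {Q : loop} (a : Q) : Q -> Q := fun x => mul x a.
Definition Lt {Q : loop} (a : Q) : Q -> Q := fun x => mul a x.

(** The multiplication group Mlt(Q): the group of permutations of Q generated
    by all R_a and L_a. *)
Inductive mlt (Q : loop) : (Q -> Q) -> Prop :=
  | mlt_id : mlt Q (fun x => x)
  | mlt_R : forall a f, mlt Q f -> mlt Q (fun x => Rt a (f x))
  | mlt_L : forall a f, mlt Q f -> mlt Q (fun x => Lt a (f x))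
  | mlt_Rinv : forall a f, mlt Q f -> mlt Q (fun x => rdiv (f x) a)
  | mlt_Linv : forall a f, mlt Q f -> mlt Q (fun x => ldiv a (f x)).

Definition inner_mapping (Q : loop) (f : Q -> Q) : Prop :=
  mlt Q f /\ f one = one.

(** Automorphic loop: every inner mapping is an automorphism (inner mappings
    are already bijections, being elements of Mlt(Q)). *)
Definition automorphic (Q : loop) : Prop :=
  forall f, inner_mapping Q f -> forall x y, f (mul x y) = mul (f x) (f y).

(** Inverse: x^{-1} := x \ 1 (the right inverse).  In an automorphic loop
    (indeed in any power-associative loop) this coincides with the left
    inverse 1/x and is the two-sided inverse. *)
Definition linv {Q : loop} (x : Q) : Q := ldiv x one.

(* Every inner mapping is an automorphism, hence commutes with inversion.
   Applied to T_x : t |-> x\(tx) this shows that x\1 is a two-sided inverse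
   and that Q is flexible; applied to L_{x,w} : t |-> (wx)\(w(xt)) with
   w = y^-1 x^-1, which fixes w by flexibility, it gives (xy)^-1 = y^-1 x^-1.
   Identities (1) and (2) are evaluations of T_u.  For (3) and (4) one uses the
   inner mappings R : t |-> ((tu)z)/y and F : t |-> ((ty)/z)(y/z)^-1 (with
   u = y/z, so uz = y): (3) is R(x) = R(x/u) R(u), and (4) is
   F(x) = F(x/y) F(y) once F(y) = y, which follows from F(1) = 1.  Identity (5)
   is the inverse of an instance of (4), and (6) combines (3) and (4). *)


Section LoopBasics.

Context {Q : loop}.
Implicit Types a b c x y : Q.

Lemma mul_left_inj a b c : mul a b = mul a c -> b = c.
Proof. intro H. rewrite <- (ldiv_mul Q a b), H. apply ldiv_mul. Qed.

Lemma mul_right_inj a b c : mul b a = mul c a -> b = c.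
Proof. intro H. rewrite <- (mul_rdiv Q b a), H. apply mul_rdiv. Qed.

Lemma ldiv_eq a b c : mul a c = b -> ldiv a b = c.
Proof. intros <-. apply ldiv_mul. Qed.

Lemma rdiv_eq a b c : mul c a = b -> rdiv b a = c.
Proof. intros <-. apply mul_rdiv. Qed.

Lemma ldiv_self a : ldiv a a = one.
Proof. apply ldiv_eq, mul1r. Qed.

Lemma rdiv_self a : rdiv a a = one.
Proof. apply rdiv_eq, mul1l. Qed.

Lemma mul_linv x : mul x (linv x) = one.
Proof. apply mul_ldiv. Qed.

Lemma linv_eq a b : mul a b = one -> linv a = b.
Proof. apply ldiv_eq. Qed.

Section Homomorphism.

Context {f : Q -> Q}.
Hypothesis f_mul : forall a b, f (mul a b) = mul (f a) (f b).

Lemma hom_one : f one = one.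
Proof.
  apply (mul_left_inj (f one)).
  rewrite <- f_mul, !mul1r. reflexivity.
Qed.

Lemma hom_linv a : f (linv a) = linv (f a).
Proof. symmetry. apply linv_eq. rewrite <- f_mul, mul_linv. apply hom_one. Qed.

Lemma hom_rdiv a b : f (rdiv a b) = rdiv (f a) (f b).
Proof. symmetry. apply rdiv_eq. rewrite <- f_mul, rdiv_mul_. reflexivity. Qed.

End Homomorphism.

End LoopBasics.

Section AutomorphicLoop.

Variable Q : loop.
Hypothesis HQ : automorphic Q.
Implicit Types a b t x y z : Q.

Lemma inner_mul (f : Q -> Q) :
  mlt Q f -> f one = one -> forall a b, f (mul a b) = mul (f a) (f b).
Proof. intros Hf H1. apply HQ. split; assumption. Qed.

Definition middle_inner x t := ldiv x (mul t x).

Lemma middle_inner_mul x a b :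
  middle_inner x (mul a b) = mul (middle_inner x a) (middle_inner x b).
Proof.
  apply inner_mul.
  - exact (mlt_Linv Q x _ (mlt_R Q x _ (mlt_id Q))).
  - unfold middle_inner. rewrite mul1l. apply ldiv_self.
Qed.

Lemma middle_inner_self x : middle_inner x x = x.
Proof. apply ldiv_mul. Qed.

Lemma mul_linv_l x : mul (linv x) x = one.
Proof.
  assert (Hfix : middle_inner x (linv x) = linv x).
  { rewrite (hom_linv (middle_inner_mul x)), middle_inner_self. reflexivity. }
  rewrite <- (mul_ldiv Q x (mul (linv x) x)).
  change (ldiv x (mul (linv x) x)) with (middle_inner x (linv x)).
  rewrite Hfix. apply mul_linv.
Qed.

Lemma rdiv_one_l x : rdiv one x = linv x.
Proof. apply rdiv_eq, mul_linv_l. Qed.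

Lemma linv_linv x : linv (linv x) = x.
Proof. apply linv_eq, mul_linv_l. Qed.

Lemma middle_inner_mul_l x y : middle_inner x (mul x y) = mul y x.
Proof.
  rewrite middle_inner_mul, middle_inner_self.
  unfold middle_inner. apply mul_ldiv.
Qed.

Lemma flexible x y : mul (mul x y) x = mul x (mul y x).
Proof.
  rewrite <- (middle_inner_mul_l x y). unfold middle_inner.
  symmetry. apply mul_ldiv.
Qed.

Lemma mul_ldiv_l x a : mul (ldiv x a) x = ldiv x (mul a x).
Proof.
  symmetry. apply ldiv_eq.
  rewrite <- flexible, mul_ldiv. reflexivity.
Qed.

Lemma linv_mul x y : linv (mul x y) = mul (linv y) (linv x).
Proof.
  set (w := mul (linv y) (linv x)).
  set (f := fun t => ldiv (mul w x) (mul w (mul x t))).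
  assert (f_mul : forall a b, f (mul a b) = mul (f a) (f b)).
  { apply inner_mul.
    - exact (mlt_Linv Q _ _ (mlt_L Q w _ (mlt_L Q x _ (mlt_id Q)))).
    - unfold f. rewrite mul1r. apply ldiv_self. }
  assert (f_w : f w = w).
  { unfold f. rewrite <- flexible. apply ldiv_mul. }
  assert (f_linv_y : f (linv y) = mul w x).
  { apply (mul_right_inj (f (linv x))).
    rewrite <- f_mul. fold w. rewrite f_w.
    unfold f. rewrite mul_linv, mul1r, mul_ldiv. reflexivity. }
  assert (Hw : mul w (mul x y) = one).
  { rewrite <- (mul_ldiv Q (mul w x) (mul w (mul x y))).
    fold (f y). rewrite <- f_linv_y, <- f_mul, mul_linv_l.
    apply (hom_one f_mul). }
  rewrite <- rdiv_one_l. apply rdiv_eq. exact Hw.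
Qed.

Lemma linv_rdiv x y : linv (rdiv x y) = ldiv (linv y) (linv x).
Proof.
  symmetry. apply ldiv_eq.
  rewrite <- linv_mul, rdiv_mul_. reflexivity.
Qed.

Lemma linv_rdiv_linv_rdiv x y :
  mul (linv (rdiv x (linv (rdiv x y)))) (rdiv x y)
  = mul (linv (rdiv x y)) (linv y).
Proof.
  set (u := rdiv x y).
  assert (Hx : x = mul u y) by (symmetry; apply rdiv_mul_).
  rewrite linv_rdiv, linv_linv, mul_ldiv_l.
  change (ldiv u (mul (linv x) u)) with (middle_inner u (linv x)).
  rewrite (hom_linv (middle_inner_mul u)), Hx, middle_inner_mul_l.
  apply linv_mul.
Qed.

Lemma linv_rdiv_linv_rdiv_mul x y :
  mul (linv (rdiv (linv (rdiv x (mul x y))) (linv x))) x = rdiv x (mul y x).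
Proof.
  rewrite linv_rdiv, !linv_linv, mul_ldiv_l.
  change (ldiv x (mul (rdiv x (mul x y)) x))
    with (middle_inner x (rdiv x (mul x y))).
  rewrite (hom_rdiv (middle_inner_mul x)), middle_inner_self, middle_inner_mul_l.
  reflexivity.
Qed.

Lemma rdiv_mul_mul_rdiv x y z :
  rdiv (mul (mul x (rdiv y z)) z) y = mul (rdiv (mul x z) y) (linv (rdiv z y)).
Proof.
  set (u := rdiv y z).
  set (f := fun t => rdiv (mul (mul t u) z) y).
  assert (f_mul : forall a b, f (mul a b) = mul (f a) (f b)).
  { apply inner_mul.
    - exact (mlt_Rinv Q y _ (mlt_R Q z _ (mlt_R Q u _ (mlt_id Q)))).
    - unfold f, u. rewrite mul1l, rdiv_mul_. apply rdiv_self. }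
  assert (f_rdiv : f (rdiv x u) = rdiv (mul x z) y).
  { unfold f. rewrite rdiv_mul_. reflexivity. }
  assert (f_linv_u : f (linv u) = rdiv z y).
  { unfold f. rewrite mul_linv_l, mul1l. reflexivity. }
  rewrite <- f_rdiv, <- f_linv_u, <- (hom_linv f_mul), linv_linv, <- f_mul,
    rdiv_mul_.
  reflexivity.
Qed.

Lemma mul_rdiv_mul_linv_rdiv x y z :
  mul (rdiv (mul x y) z) (linv (rdiv y z))
  = mul (mul (rdiv x z) (linv (rdiv y z))) y.
Proof.
  set (v := linv (rdiv y z)).
  set (f := fun t => mul (rdiv (mul t y) z) v).
  assert (f_mul : forall a b, f (mul a b) = mul (f a) (f b)).
  { apply inner_mul.
    - exact (mlt_R Q v _ (mlt_Rinv Q z _ (mlt_R Q y _ (mlt_id Q)))).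
    - unfold f, v. rewrite mul1l. apply mul_linv. }
  assert (f_split : forall t, f t = mul (mul (rdiv t z) v) (f y)).
  { intro t. transitivity (f (mul (rdiv t y) y)).
    - rewrite rdiv_mul_. reflexivity.
    - rewrite f_mul. unfold f at 1. rewrite rdiv_mul_. reflexivity. }
  assert (f_y : f y = y).
  { assert (Hone : mul (mul (rdiv one z) v) (f y) = one).
    { rewrite <- f_split. apply (hom_one f_mul). }
    apply linv_eq in Hone. rewrite <- Hone.
    unfold v. rewrite rdiv_one_l, linv_mul, !linv_linv. apply rdiv_mul_. }
  transitivity (mul (mul (rdiv x z) v) (f y)).
  - exact (f_split x).
  - rewrite f_y. reflexivity.
Qed.

Lemma mul_linv_mul_rdiv x y t :
  mul (linv x) (mul (rdiv x t) (linv (rdiv (rdiv y x) t)))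
  = mul (rdiv x t) (linv (rdiv y t)).
Proof.
  pose proof (mul_rdiv_mul_linv_rdiv (rdiv y x) x t) as H.
  rewrite rdiv_mul_ in H.
  apply (f_equal linv) in H.
  rewrite !linv_mul, !linv_linv in H.
  symmetry. exact H.
Qed.

Lemma rdiv_linv_rdiv_mul x y :
  rdiv (linv (rdiv x (mul x y))) (mul (rdiv y (mul x y)) (linv (rdiv x (mul x y))))
  = x.
Proof.
  set (m := mul x y); set (a := rdiv x m); set (b := rdiv y m).
  set (c := mul b (linv a)).
  assert (Hyc : mul (linv y) c = b).
  { pose proof (mul_rdiv_mul_linv_rdiv x y m) as H.
    fold m a b in H. rewrite rdiv_self, mul1l in H.
    apply (f_equal linv) in H.
    rewrite linv_linv, linv_mul, linv_mul, linv_linv in H.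
    symmetry. exact H. }
  assert (Hxc : mul (mul (rdiv (linv x) (linv a)) (linv b)) c = b).
  { assert (Hm : rdiv (linv x) (linv a) = linv m).
    { apply rdiv_eq. rewrite <- linv_mul. unfold a. rewrite rdiv_mul_. reflexivity. }
    rewrite Hm, <- linv_mul. unfold b. rewrite rdiv_mul_. exact Hyc. }
  pose proof (rdiv_mul_mul_rdiv (linv x) (linv a) c) as Hsplit.
  pose proof (mul_rdiv_mul_linv_rdiv (linv x) c (linv a)) as Hcomm.
  assert (Hcb : rdiv c (linv a) = b) by apply mul_rdiv.
  rewrite Hcb in Hsplit, Hcomm.
  rewrite Hcomm, Hxc in Hsplit.
  apply (f_equal (fun s => mul s (linv a))) in Hsplit.
  rewrite rdiv_mul_ in Hsplit. fold c in Hsplit.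
  assert (Hg : mul (linv x) (rdiv (linv a) c) = one).
  { apply (mul_right_inj c). rewrite mul1l. exact Hsplit. }
  apply linv_eq in Hg. rewrite <- Hg. apply linv_linv.
Qed.

End AutomorphicLoop.

Theorem lemma3p2 (Q : loop) (HQ : automorphic Q) (x y z : Q) :
  let inv := @linv Q in
  let t := rdiv (mul x y) x in
  (* (1) *)
  mul (inv (rdiv x (inv (rdiv x y)))) (rdiv x y)
    = mul (inv (rdiv x y)) (inv y)
  (* (2) *)
  /\ mul (inv (rdiv (inv (rdiv x (mul x y))) (inv x))) x
    = rdiv x (mul y x)
  (* (3) *)
  /\ rdiv (mul (mul x (rdiv y z)) z) y
    = mul (rdiv (mul x z) y) (inv (rdiv z y))
  (* (4) *)
  /\ mul (rdiv (mul x y) z) (inv (rdiv y z))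
    = mul (mul (rdiv x z) (inv (rdiv y z))) y
  (* (5) *)
  /\ mul (inv x) (mul (rdiv x t) (inv (rdiv (rdiv y x) t)))
    = mul (rdiv x t) (inv (rdiv y t))
  (* (6) *)
  /\ rdiv (inv (rdiv x (mul x y)))
          (mul (rdiv y (mul x y)) (inv (rdiv x (mul x y))))
    = x.
Proof.
  intros inv t.
  split; [exact (linv_rdiv_linv_rdiv Q HQ x y) |].
  split; [exact (linv_rdiv_linv_rdiv_mul Q HQ x y) |].
  split; [exact (rdiv_mul_mul_rdiv Q HQ x y z) |].
  split; [exact (mul_rdiv_mul_linv_rdiv Q HQ x y z) |].
  split; [exact (mul_linv_mul_rdiv Q HQ x y t) |].
  exact (rdiv_linv_rdiv_mul Q HQ x y).
Qed.
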